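(* Backward proof search in $\mathsf{G}(\mathbf{KT}^+_D)$ always terminates: there is no infinite sequence of T-sequents $S_0,S_1,S_2,\dots$ such that, for every $i$, $S_{i+1}$ is a premise of some instance of a rule of $\mathsf{G}(\mathbf{KT}^+_D)$ whose conclusion is $S_i$.
   Context: Language: fix a finite nonempty set $\mathsf{Agt}$ of agents and a countable set $\mathsf{Prop}$ of propositional variables; $\mathsf{Grp}$ is the set of nonempty subsets of $\mathsf{Agt}$. Formulas: $\alpha::=p\mid\bot\mid\alpha\wedge\alpha\mid\alpha\vee\alpha\mid\alpha\rightarrow\alpha\mid\neg\alpha\mid D_G\alpha$ ($p\in\mathsf{Prop}$, $G\in\mathsf{Grp}$). Outmost-boxed formula: one of the form $D_G\gamma$. Calculus $\mathsf{G}(\mathbf{KT}^+_D)$: a T-sequent $\Sigma\mid\Gamma\Rightarrow\Delta$ consists of finite multisets $\Gamma,\Delta$ of formulas and a finite multiset $\Sigma$ of outmost-boxed formulas. Initial sequents: $\Sigma\mid\Gamma,p\Rightarrow p,\Delta$ ($p\in\mathsf{Prop}$) and $\Sigma\mid\bot,\Gamma\Rightarrow\Delta$. Propositional rules (with $\Sigma$ unchanged): $(R\wedge)$ from $\Sigma\mid\Gamma\Rightarrow\Delta,\alpha_1$ and $\Sigma\mid\Gamma\Rightarrow\Delta,\alpha_2$ infer $\Sigma\mid\Gamma\Rightarrow\Delta,\alpha_1\wedge\alpha_2$; $(L\wedge)$ from $\Sigma\mid\alpha_1,\alpha_2,\Gamma\Rightarrow\Delta$ infer $\Sigma\mid\alpha_1\wedge\alpha_2,\Gamma\Rightarrow\Delta$;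 $(R\vee)$ from $\Sigma\mid\Gamma\Rightarrow\Delta,\alpha_1,\alpha_2$ infer $\Sigma\mid\Gamma\Rightarrow\Delta,\alpha_1\vee\alpha_2$; $(L\vee)$ from $\Sigma\mid\alpha_1,\Gamma\Rightarrow\Delta$ and $\Sigma\mid\alpha_2,\Gamma\Rightarrow\Delta$ infer $\Sigma\mid\alpha_1\vee\alpha_2,\Gamma\Rightarrow\Delta$; $(R\rightarrow)$ from $\Sigma\mid\alpha_1,\Gamma\Rightarrow\Delta,\alpha_2$ infer $\Sigma\mid\Gamma\Rightarrow\Delta,\alpha_1\rightarrow\alpha_2$; $(L\rightarrow)$ from $\Sigma\mid\Gamma\Rightarrow\Delta,\alpha_1$ and $\Sigma\mid\alpha_2,\Gamma\Rightarrow\Delta$ infer $\Sigma\mid\alpha_1\rightarrow\alpha_2,\Gamma\Rightarrow\Delta$; $(R\neg)$ from $\Sigma\mid\alpha,\Gamma\Rightarrow\Delta$ infer $\Sigma\mid\Gamma\Rightarrow\Delta,\neg\alpha$; $(L\neg)$ from $\Sigma\mid\Gamma\Rightarrow\Delta,\alpha$ infer $\Sigma\mid\neg\alpha,\Gamma\Rightarrow\Delta$. Modal rules: $(D_K^+)$: from $\emptyset\mid\alpha_1,\dots,\alpha_n\Rightarrow\beta$ ($n\ge0$) infer $\Sigma,D_{G_1}\alpha_1,\dots,D_{G_n}\alpha_n\mid\Pi\Rightarrow D_G\beta,\Omega$, provided $G_i\subseteq G$ for all $i$, $\Sigma$ consists only of formulas $D_H\gamma$ with $H\not\subseteq G$,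 $\Pi$ only of propositional variables and $\bot$, and $\Omega$ only of propositional variables, $\bot$ and outmost-boxed formulas; $(D_T^+)$: from $D_G\alpha,\Sigma\mid\Gamma,\alpha\Rightarrow\Delta$ infer $\Sigma\mid\Gamma,D_G\alpha\Rightarrow\Delta$. *)

From mathcomp Require Import all_boot.
From Stdlib Require Import List Permutation.
Import ListNotations.

Set Implicit Arguments.
Unset Strict Implicit.
Unset Printing Implicit Defensive.

Section Logic.
Variable Agt : finType.

Definition grp := {G : {set Agt} | G != set0}.

Inductive form : Type :=
| Var : nat -> form
| Bot : form
| And : form -> form -> form
| Or  : form -> form -> form
| Imp : form -> form -> form
| Neg : form -> form
| Box : grp -> form -> form.

(* Outmost-boxed formulas D_G g are represented by the pair (G, g). *)
Definition boxed := (grp * form)%type.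
Definition box_of (b : boxed) : form := Box b.1 b.2.

(* T-sequent  Sigma | Gamma => Delta ; lists read as multisets (see tseq_equiv) *)
Definition tseq := (list boxed * list form * list form)%type.

Definition mk (S : list boxed) (G D : list form) : tseq := (S, G, D).

Definition is_var_or_bot (f : form) : Prop :=
  match f with Var _ | Bot => True | _ => False end.
Definition is_var_bot_or_boxed (f : form) : Prop :=
  match f with Var _ | Bot | Box _ _ => True | _ => False end.

Inductive rule_inst : list tseq -> tseq -> Prop :=
| r_init_var : forall S G D p,
    rule_inst [] (mk S (Var p :: G) (Var p :: D))
| r_init_bot : forall S G D,
    rule_inst [] (mk S (Bot :: G) D)
| r_Rand : forall S G D a1 a2,
    rule_inst [mk S G (a1 :: D); mk S G (a2 :: D)] (mk S G (And a1 a2 :: D))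
| r_Land : forall S G D a1 a2,
    rule_inst [mk S (a1 :: a2 :: G) D] (mk S (And a1 a2 :: G) D)
| r_Ror : forall S G D a1 a2,
    rule_inst [mk S G (a1 :: a2 :: D)] (mk S G (Or a1 a2 :: D))
| r_Lor : forall S G D a1 a2,
    rule_inst [mk S (a1 :: G) D; mk S (a2 :: G) D] (mk S (Or a1 a2 :: G) D)
| r_Rimp : forall S G D a1 a2,
    rule_inst [mk S (a1 :: G) (a2 :: D)] (mk S G (Imp a1 a2 :: D))
| r_Limp : forall S G D a1 a2,
    rule_inst [mk S G (a1 :: D); mk S (a2 :: G) D] (mk S (Imp a1 a2 :: G) D)
| r_Rneg : forall S G D a,
    rule_inst [mk S (a :: G) D] (mk S G (Neg a :: D))
| r_Lneg : forall S G D a,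
    rule_inst [mk S G (a :: D)] (mk S (Neg a :: G) D)
| r_DK : forall (S : list boxed) (bs : list boxed) (Pi Om : list form)
                (Gr : grp) (b : form),
    (forall x, In x bs -> val x.1 \subset val Gr) ->
    (forall x, In x S -> ~~ (val x.1 \subset val Gr)) ->
    (forall f, In f Pi -> is_var_or_bot f) ->
    (forall f, In f Om -> is_var_bot_or_boxed f) ->
    rule_inst [mk [] (map snd bs) [b]] (mk (S ++ bs) Pi (Box Gr b :: Om))
| r_DT : forall S G D (Gr : grp) a,
    rule_inst [mk ((Gr, a) :: S) (a :: G) D] (mk S (Box Gr a :: G) D).

Definition tseq_equiv (s t : tseq) : Prop :=
  Permutation s.1.1 t.1.1 /\ Permutation s.1.2 t.1.2 /\ Permutation s.2 t.2.

Definition back_step (c p : tseq) : Prop :=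
  exists ps c0 p0, rule_inst ps c0 /\ tseq_equiv c c0 /\ In p0 ps /\ tseq_equiv p0 p.

End Logic.

(** Every rule of the calculus, read backwards, either strictly lowers the
    modal depth of the T-sequent (only [D_K^+], which discards everything but
    the boxed formulas it opens) or does not raise it and strictly lowers the
    total size of the formulas in [Gamma] and [Delta].  The box-context
    [Sigma] counts for the depth but not for the size; this is what lets
    [D_T^+] move [D_G a] from [Gamma] into [Sigma] at no cost in depth.  Hence
    the pair (depth, size) decreases lexicographically along any backward
    proof-search branch, and no such branch is infinite. *)
From Stdlib Require Import List Permutation Relations Wellfounded Lia.
From mathcomp Require Import all_boot zify.
Import ListNotations.

Set Implicit Arguments.
Unset Strict Implicit.

Lemma well_founded_no_descending_chain (A : Type) (R : relation A) :
  well_founded R -> ~ exists s : nat -> A, forall i, R (s i.+1) (s i).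
Proof.
move=> wfR [s desc].
have noAcc x : Acc R x -> forall i, s i = x -> False.
  elim=> {}x _ IH i si; apply: (IH (s i.+1) _ i.+1 erefl).
  by rewrite -si; exact: desc.
exact: noAcc (wfR (s 0)) 0 erefl.
Qed.

Definition lex_lt : relation (nat * nat) := slexprod nat nat lt lt.

Lemma well_founded_lex_lt : well_founded lex_lt.
Proof. exact: wf_slexprod Wf_nat.lt_wf Wf_nat.lt_wf. Qed.

Lemma lex_lt_le_lt (d d' n n' : nat) :
  d' <= d -> (d' < d) || (n' < n) -> lex_lt (d', n') (d, n).
Proof.
rewrite leq_eqVlt => /orP[/eqP-> | lt_d] lt_dn.
- by apply: right_slex; apply/ltP; rewrite ltnn in lt_dn.
- by apply: left_slex; apply/ltP.
Qed.

Section Measure.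
Variable Agt : finType.

Fixpoint fsize (f : form Agt) : nat :=
  match f with
  | Var _ | Bot => 1
  | And a b | Or a b | Imp a b => (fsize a + fsize b).+1
  | Neg a | Box _ a => (fsize a).+1
  end.

Fixpoint fdepth (f : form Agt) : nat :=
  match f with
  | Var _ | Bot => 0
  | And a b | Or a b | Imp a b => Nat.max (fdepth a) (fdepth b)
  | Neg a => fdepth a
  | Box _ a => (fdepth a).+1
  end.

Definition tseq_depth (s : tseq Agt) : nat :=
  Nat.max (list_max (map (fun b => fdepth (box_of b)) s.1.1))
    (Nat.max (list_max (map fdepth s.1.2)) (list_max (map fdepth s.2))).

Definition tseq_size (s : tseq Agt) : nat :=
  list_sum (map fsize s.1.2) + list_sum (map fsize s.2).

Definition tseq_measure (s : tseq Agt) : nat * nat := (tseq_depth s, tseq_size s).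

Lemma tseq_equiv_measure (s t : tseq Agt) :
  tseq_equiv s t -> tseq_measure s = tseq_measure t.
Proof.
move=> [pS [pG pD]]; rewrite /tseq_measure /tseq_depth /tseq_size.
by rewrite (Permutation_list_max (Permutation_map _ pS))
  (Permutation_list_max (Permutation_map _ pG))
  (Permutation_list_max (Permutation_map _ pD))
  (Permutation_list_sum (Permutation_map _ pG))
  (Permutation_list_sum (Permutation_map _ pD)).
Qed.

Lemma list_max_fdepth_unbox (bs : list (boxed Agt)) :
  list_max (map fdepth (List.map snd bs))
  <= (list_max (map (fun b : boxed Agt => (fdepth b.2).+1) bs)).-1.
Proof.
elim: bs => [|b bs IH] //; rewrite /list_max in IH *.
by cbn [map List.map fold_right fdepth] in IH |- *; lia.
Qed.

Lemma tseq_depth_DK_lt (S bs : list (boxed Agt)) (Pi Om : list (form Agt))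
    (Gr : grp Agt) (b : form Agt) :
  tseq_depth (mk [] (List.map snd bs) [b])
  < tseq_depth (mk (S ++ bs) Pi (Box Gr b :: Om)).
Proof.
have := list_max_fdepth_unbox bs.
rewrite /tseq_depth /mk /box_of map_cat list_max_app /list_max.
by cbn [fst snd map fold_right fdepth]; lia.
Qed.

Lemma rule_inst_lex_lt (ps : list (tseq Agt)) (c p : tseq Agt) :
  rule_inst ps c -> In p ps -> lex_lt (tseq_measure p) (tseq_measure c).
Proof.
case; intros; cbn [In] in *; repeat match goal with
  | H : _ \/ _ |- _ => destruct H
  | H : False |- _ => destruct H
  end; subst; apply: lex_lt_le_lt;
  try by [exact: ltnW (tseq_depth_DK_lt _ _ _ _ _ _) | rewrite tseq_depth_DK_lt].
all: rewrite /tseq_depth /tseq_size /mk /box_of.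
all: by cbn [fst snd map list_sum list_max fold_right fsize fdepth]; lia.
Qed.

Lemma back_step_lex_lt (c p : tseq Agt) :
  back_step c p -> lex_lt (tseq_measure p) (tseq_measure c).
Proof.
move=> [ps [c0 [p0 [r [eq_c [in_p0 eq_p]]]]]].
rewrite (tseq_equiv_measure eq_c) -(tseq_equiv_measure eq_p).
exact: rule_inst_lex_lt r in_p0.
Qed.

End Measure.

Theorem proposition6p7 (Agt : finType) (HAgt : 0 < #|Agt|) :
  ~ (exists s : nat -> tseq Agt, forall i : nat, back_step (s i) (s i.+1)).
Proof.
move=> [s steps].
apply: (well_founded_no_descending_chain
          (wf_inverse_image _ _ lex_lt (@tseq_measure Agt) well_founded_lex_lt)).
by exists s => i; exact: back_step_lex_lt (steps i).
Qed.
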